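(* If $X$ is a Rothberger space satisfying ${\sf S}_1(\mathcal{G}_K,\mathcal{G}_{D_\Gamma})$, then $X$ is productively weakly Rothberger: for every weakly Rothberger space $Y$, $X\times Y$ is weakly Rothberger.
   Context: All spaces are infinite ${\sf T}_1$ topological spaces. $\mathcal{G}_K$ is the family of all collections $\mathcal{U}$ of ${\sf G}_\delta$ subsets of $X$ with $X\notin\mathcal{U}$ such that each compact subset of $X$ is contained in some member of $\mathcal{U}$. $\mathcal{G}_{D_\Gamma}$ is the family of infinite collections $\mathcal{U}$ of ${\sf G}_\delta$ subsets of $X$ such that for each nonempty open $U\subseteq X$, $\{V\in\mathcal{U}:U\cap V=\emptyset\}$ is finite. ${\sf S}_1(\mathcal{A},\mathcal{B})$: for each sequence $(A_n)$ of elements of $\mathcal{A}$ there are $B_n\in A_n$ with $\{B_n:n\in\mathbb{N}\}\in\mathcal{B}$. Rothberger: for each sequence $(\mathcal{U}_n)$ of open covers there are $U_n\in\mathcal{U}_n$ with $\{U_n\}$ a cover. Weakly Rothberger: for each sequence $(\mathcal{U}_n)$ of open covers there are $U_n\in\mathcal{U}_n$ with $\bigcup_nU_n$ dense. *)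

From Stdlib Require Import List Classical.
Import ListNotations.

Set Implicit Arguments.

Definition set_eq {X : Type} (A B : X -> Prop) : Prop := forall x, A x <-> B x.
Definition subset {X : Type} (A B : X -> Prop) : Prop := forall x, A x -> B x.

Definition is_topology {X : Type} (op : (X -> Prop) -> Prop) : Prop :=
  op (fun _ => True) /\
  (forall U V, op U -> op V -> op (fun x => U x /\ V x)) /\
  (forall F : (X -> Prop) -> Prop, (forall U, F U -> op U) ->
     op (fun x => exists U, F U /\ U x)).

Definition T1 {X : Type} (op : (X -> Prop) -> Prop) : Prop :=
  forall x y : X, x <> y -> exists U, op U /\ U x /\ ~ U y.

Definition infinite_type (X : Type) : Prop :=
  ~ exists l : list X, forall x, In x l.

Definition prod_open {X Y : Type} (opX : (X -> Prop) -> Prop) (opY : (Y -> Prop) -> Prop)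
  (W : X * Y -> Prop) : Prop :=
  forall p, W p -> exists U V, opX U /\ opY V /\ U (fst p) /\ V (snd p) /\
     (forall a b, U a -> V b -> W (a, b)).

Definition open_cover {X : Type} (op : (X -> Prop) -> Prop) (F : (X -> Prop) -> Prop) : Prop :=
  (forall U, F U -> op U) /\ (forall x, exists U, F U /\ U x).

Definition compact_subset {X : Type} (op : (X -> Prop) -> Prop) (K : X -> Prop) : Prop :=
  forall F : (X -> Prop) -> Prop, (forall U, F U -> op U) ->
    (forall x, K x -> exists U, F U /\ U x) ->
    exists l : list (X -> Prop), (forall U, In U l -> F U) /\
      (forall x, K x -> exists U, In U l /\ U x).

Definition Gdelta {X : Type} (op : (X -> Prop) -> Prop) (A : X -> Prop) : Prop :=
  exists U : nat -> X -> Prop, (forall n, op (U n)) /\ set_eq A (fun x => forall n, U n x).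

Definition infinite_family {X : Type} (F : (X -> Prop) -> Prop) : Prop :=
  forall l : list (X -> Prop), exists A, F A /\ forall B, In B l -> ~ set_eq A B.

Definition finite_family {X : Type} (F : (X -> Prop) -> Prop) : Prop :=
  exists l : list (X -> Prop), forall A, F A -> exists B, In B l /\ set_eq A B.

Definition G_K {X : Type} (op : (X -> Prop) -> Prop) (F : (X -> Prop) -> Prop) : Prop :=
  (forall A, F A -> Gdelta op A) /\
  ~ (exists A, F A /\ set_eq A (fun _ => True)) /\
  (forall K, compact_subset op K -> exists A, F A /\ subset K A).

Definition G_DGamma {X : Type} (op : (X -> Prop) -> Prop) (F : (X -> Prop) -> Prop) : Prop :=
  (forall A, F A -> Gdelta op A) /\
  infinite_family F /\
  (forall U, op U -> (exists x, U x) ->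
     finite_family (fun V => F V /\ forall x, ~ (U x /\ V x))).

Definition S1 {X : Type} (clA clB : ((X -> Prop) -> Prop) -> Prop) : Prop :=
  forall Fs : nat -> (X -> Prop) -> Prop, (forall n, clA (Fs n)) ->
    exists B : nat -> X -> Prop, (forall n, Fs n (B n)) /\
      clB (fun S => exists n, S = B n).

Definition Rothberger {X : Type} (op : (X -> Prop) -> Prop) : Prop :=
  forall Us : nat -> (X -> Prop) -> Prop, (forall n, open_cover op (Us n)) ->
    exists U : nat -> X -> Prop, (forall n, Us n (U n)) /\
      (forall x, exists n, U n x).

Definition weakly_Rothberger {X : Type} (op : (X -> Prop) -> Prop) : Prop :=
  forall Us : nat -> (X -> Prop) -> Prop, (forall n, open_cover op (Us n)) ->
    exists U : nat -> X -> Prop, (forall n, Us n (U n)) /\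
      (* the union of the U n is dense: it meets every nonempty open set *)
      (forall W, op W -> (exists x, W x) -> exists n x, W x /\ U n x).

From Stdlib Require Import List Classical FunctionalExtensionality PropExtensionality
  IndefiniteDescription Cantor.
Import ListNotations.

(* Fix a weakly Rothberger Y and a sequence (W_n) of open covers of X x Y.
   1. Tube lemma (Rothberger version): for a compact K in X and y in Y, one
      selection from a sequence of covers of X x Y covers a tube O x V with
      K in O and y in V.
   2. Applying this at every y and using that Y is weakly Rothberger, a
      doubly indexed sequence of covers admits a selection whose sections over
      every point of some G_delta set A containing K are dense in Y.
   3. If X is compact, take K = X.  Otherwise every compact K misses a point,
      and removing it (X is T1) shows that the G_delta sets different from X
      carrying such a selection form a member of G_K, for each k.  Applying
      S_1(G_K, G_{D_Gamma}) gives sets B_k forming a G_{D_Gamma} family, so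
      every nonempty open U of X meets some B_k.
   4. In both cases the dense sections meet every open rectangle, and
      flattening the countably many selections with the Cantor pairing yields
      the selection witnessing weak Rothbergerness of X x Y. *)

Lemma open_ext {X : Type} (op : (X -> Prop) -> Prop) (U V : X -> Prop) :
  op U -> (forall x, U x <-> V x) -> op V.
Proof.
  intros HU E. replace V with U; auto.
  apply functional_extensionality; intro x; apply propositional_extensionality; auto.
Qed.

Lemma open_finite_inter {X : Type} (op : (X -> Prop) -> Prop) (hX : is_topology op)
  (Vs : nat -> X -> Prop) (hV : forall i, op (Vs i)) :
  forall li : list nat, op (fun b => forall i, In i li -> Vs i b).
Proof.
  destruct hX as [hT [hI _]].
  induction li as [|i0 li IH].
  - apply (open_ext op (fun _ => True)); auto. intros x; split; auto. intros _ i [].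
  - apply (open_ext op (fun b => Vs i0 b /\ (forall i, In i li -> Vs i b))); auto.
    intros x; split.
    + intros [H1 H2] i [->|Hi]; auto.
    + intros H; split; [apply H; left; auto | intros i Hi; apply H; right; auto].
Qed.

Lemma finite_indices {A : Type} (g : nat -> A) :
  forall l : list A, (forall U, In U l -> exists i, U = g i) ->
  exists li : list nat, forall U, In U l -> exists i, In i li /\ U = g i.
Proof.
  induction l as [|u l IH]; intros H.
  - exists []. intros U [].
  - destruct (H u (or_introl eq_refl)) as [i0 Hi0].
    destruct IH as [li Hli]. { intros U HU; apply H; right; auto. }
    exists (i0 :: li). intros U [<-|HU].
    + exists i0; split; [left|]; auto.
    + destruct (Hli U HU) as [i [Hi E]]; exists i; split; [right|]; auto.
Qed.

Lemma T1_open_complement {X : Type} (op : (X -> Prop) -> Prop)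
  (hX : is_topology op) (hT1 : T1 op) (p : X) : op (fun a => a <> p).
Proof.
  destruct hX as [_ [_ hU]].
  apply (open_ext op (fun x => exists U, (op U /\ ~ U p) /\ U x)).
  - apply hU. intros U [H _]; exact H.
  - intros x; split.
    + intros [U [[_ Up] Ux]] ->; auto.
    + intros Hx. destruct (hT1 x p Hx) as [U [HU [Ux Up]]]. exists U; auto.
Qed.

Lemma noncompact_misses_point {X : Type} (op : (X -> Prop) -> Prop)
  (Hnc : ~ compact_subset op (fun _ => True)) (K : X -> Prop) :
  compact_subset op K -> exists p, ~ K p.
Proof.
  intros HK. apply NNPP; intro Hall. apply Hnc. intros F HF Hcov.
  destruct (HK F HF) as [l [H1 H2]]; [intros x _; apply Hcov; auto|].
  exists l; split; auto. intros x _. apply H2.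
  apply NNPP; intro Kx; apply Hall; eauto.
Qed.

(* If the sets B_n form a G_{D_Gamma} family, every nonempty open set meets
   some B_n: only finitely many distinct B_n miss it, but there are infinitely
   many distinct B_n. *)
Lemma G_DGamma_meets_open {X : Type} (op : (X -> Prop) -> Prop) (B : nat -> X -> Prop)
  (hB : G_DGamma op (fun S => exists n, S = B n)) (U : X -> Prop) :
  op U -> (exists x, U x) -> exists n a, U a /\ B n a.
Proof.
  intros HU Une. destruct hB as [_ [Hinf Hfin]].
  destruct (Hfin U HU Une) as [l Hl].
  destruct (Hinf l) as [A [[n ->] HA]].
  exists n. apply NNPP; intro Hmiss.
  destruct (Hl (B n)) as [B' [HB' E]].
  - split; [exists n; auto|]. intros x [Ux Bx]; apply Hmiss; eauto.
  - exact (HA B' HB' E).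
Qed.

Lemma flatten_selection {T : Type} (P : nat -> T -> Prop) (sel : nat -> nat -> T) :
  (forall j i, P (to_nat (j, i)) (sel j i)) ->
  exists S : nat -> T, (forall n, P n (S n)) /\ (forall j i, S (to_nat (j, i)) = sel j i).
Proof.
  intros Hsel. exists (fun n => sel (fst (of_nat n)) (snd (of_nat n))). split.
  - intro n. specialize (Hsel (fst (of_nat n)) (snd (of_nat n))).
    rewrite <- surjective_pairing, cancel_to_of in Hsel. exact Hsel.
  - intros j i. rewrite cancel_of_to. reflexivity.
Qed.

Section Product.

Variables (X Y : Type) (opX : (X -> Prop) -> Prop) (opY : (Y -> Prop) -> Prop).
Hypotheses (hX : is_topology opX) (hY : is_topology opY).

Let open_XY := prod_open opX opY.

Definition dense_selector (Gs : nat -> nat -> (X * Y -> Prop) -> Prop)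
  (A : X -> Prop) (sel : nat -> nat -> X * Y -> Prop) : Prop :=
  (forall j i, Gs j i (sel j i)) /\
  (forall a, A a -> forall V, opY V -> (exists b, V b) ->
     exists j i b, V b /\ sel j i (a, b)).

Lemma slice_cover (G : (X * Y -> Prop) -> Prop) (hG : open_cover open_XY G) (y : Y) :
  open_cover opX (fun U => exists V W, opX U /\ opY V /\ V y /\ G W /\
                            (forall a b, U a -> V b -> W (a, b))).
Proof.
  split.
  - intros U [V [W [HU _]]]; exact HU.
  - intro x. destruct hG as [Hop Hc].
    destruct (Hc (x, y)) as [W [HW Wxy]].
    destruct (Hop W HW (x, y) Wxy) as [U [V [HU [HV [Ux [Vy Hsub]]]]]].
    exists U; split; auto. exists V, W; repeat split; auto.
Qed.

Lemma Rothberger_tube (hR : Rothberger opX) (Gs : nat -> (X * Y -> Prop) -> Prop)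
  (hGs : forall i, open_cover open_XY (Gs i)) (K : X -> Prop)
  (hK : compact_subset opX K) (y : Y) :
  exists (V : Y -> Prop) (O : X -> Prop) (f : nat -> X * Y -> Prop),
    opY V /\ V y /\ opX O /\ (forall x, K x -> O x) /\ (forall i, Gs i (f i)) /\
    (forall a b, O a -> V b -> exists i, f i (a, b)).
Proof.
  destruct (hR _ (fun i => slice_cover (Gs i) (hGs i) y)) as [Usel [HUsel HUcov]].
  destruct (functional_choice (fun i (p : (Y -> Prop) * (X * Y -> Prop)) =>
     opY (fst p) /\ fst p y /\ Gs i (snd p) /\
     (forall a b, Usel i a -> fst p b -> snd p (a, b)))) as [g Hg].
  { intro i. destruct (HUsel i) as [V [W [_ [HV [Vy [HW Hs]]]]]]. exists (V, W); auto. }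
  assert (HUopen : forall i, opX (Usel i)).
  { intro i. destruct (HUsel i) as [V [W [HU _]]]; exact HU. }
  (* finitely many selected slices already cover K *)
  destruct (hK (fun U => exists i, U = Usel i)) as [l [Hl1 Hl2]].
  { intros U [i ->]. apply HUopen. }
  { intros x _. destruct (HUcov x) as [i Hi]. exists (Usel i); split; eauto. }
  destruct (finite_indices Usel l Hl1) as [li Hli].
  exists (fun b => forall i, In i li -> fst (g i) b),
         (fun a => exists U, (exists i, In i li /\ U = Usel i) /\ U a),
         (fun i => snd (g i)).
  repeat split.
  - apply open_finite_inter; auto. intro i; apply (Hg i).
  - intros i Hi. apply (Hg i).
  - destruct hX as [_ [_ hU]]. apply hU. intros U [i [_ ->]]. apply HUopen.
  - intros x Kx. destruct (Hl2 x Kx) as [U [HU Ux]].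
    destruct (Hli U HU) as [i [Hi ->]]. exists (Usel i); split; eauto.
  - intro i; apply (Hg i).
  - intros a b [U [[i [Hi ->]] Ua]] Vb. exists i. apply (Hg i); auto.
Qed.

(* Combining tubes at every y with weak Rothbergerness of Y: a doubly indexed
   sequence of covers has a dense selector over a G_delta set containing K. *)
Lemma dense_selector_around_compact (hR : Rothberger opX) (hW : weakly_Rothberger opY)
  (Gs : nat -> nat -> (X * Y -> Prop) -> Prop)
  (hGs : forall j i, open_cover open_XY (Gs j i)) (K : X -> Prop)
  (hK : compact_subset opX K) :
  exists (O : nat -> X -> Prop) (sel : nat -> nat -> X * Y -> Prop),
    (forall j, opX (O j)) /\ (forall j x, K x -> O j x) /\
    dense_selector Gs (fun a => forall j, O j a) sel.
Proof.
  set (Tubes := fun j (V : Y -> Prop) => opY V /\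
     exists (O : X -> Prop) (f : nat -> X * Y -> Prop),
       opX O /\ (forall x, K x -> O x) /\ (forall i, Gs j i (f i)) /\
       (forall a b, O a -> V b -> exists i, f i (a, b))).
  assert (Hcov : forall j, open_cover opY (Tubes j)).
  { intro j. split; [intros V [HV _]; exact HV|]. intro y.
    destruct (Rothberger_tube hR (Gs j) (hGs j) K hK y)
      as [V [O [f [HV [Vy H]]]]].
    exists V; repeat split; auto. exists O, f; exact H. }
  destruct (hW Tubes Hcov) as [Vsel [HVsel Hdense]].
  destruct (functional_choice (fun j (p : (X -> Prop) * (nat -> X * Y -> Prop)) =>
     opX (fst p) /\ (forall x, K x -> fst p x) /\ (forall i, Gs j i (snd p i)) /\
     (forall a b, fst p a -> Vsel j b -> exists i, snd p i (a, b)))) as [h Hh].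
  { intro j. destruct (HVsel j) as [_ [O [f H]]]. exists (O, f); exact H. }
  exists (fun j => fst (h j)), (fun j => snd (h j)).
  split; [intro j; apply (Hh j)|]. split; [intros j x Kx; apply (Hh j); auto|].
  split; [intros j i; apply (Hh j)|].
  intros a Ha V HV Vne.
  destruct (Hdense V HV Vne) as [j [b [Vb Sb]]].
  destruct (proj2 (proj2 (proj2 (Hh j))) a b (Ha j) Sb) as [i Hi].
  exists j, i, b; auto.
Qed.

(* For a non-compact T1 space X, the G_delta sets other than X carrying a
   dense selector for Gs form a member of G_K: a compact K misses a point p,
   and the G_delta set around K minus p still carries the selector. *)
Lemma dense_selector_sets_G_K (hR : Rothberger opX) (hW : weakly_Rothberger opY)
  (hT1 : T1 opX) (Hnc : ~ compact_subset opX (fun _ => True))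
  (Gs : nat -> nat -> (X * Y -> Prop) -> Prop)
  (hGs : forall j i, open_cover open_XY (Gs j i)) :
  G_K opX (fun A => Gdelta opX A /\ ~ set_eq A (fun _ => True) /\
                    exists sel, dense_selector Gs A sel).
Proof.
  split; [intros A [H _]; exact H|]. split.
  { intros [A [[_ [H _]] E]]. exact (H E). }
  intros K HK.
  destruct (noncompact_misses_point opX Hnc K HK) as [p Kp].
  destruct (dense_selector_around_compact hR hW Gs hGs K HK)
    as [O [sel [HO [HOK [Hsel Hdense]]]]].
  exists (fun a => forall n, O n a /\ a <> p). split; [split; [|split]|].
  - exists (fun n a => O n a /\ a <> p). split; [|intros x; split; auto].
    intro n. destruct hX as [_ [hI _]]. apply hI; auto.
    apply T1_open_complement; auto.
  - intros E. destruct (proj2 (E p) I 0) as [_ H]. auto.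
  - exists sel. split; auto. intros a Ha. apply Hdense. intro j; apply (Ha j).
  - intros x Kx n. split; [apply HOK; auto|]. intros ->; auto.
Qed.

Definition meets_rectangles (sel : nat -> nat -> X * Y -> Prop) : Prop :=
  forall U V, opX U -> (exists a, U a) -> opY V -> (exists b, V b) ->
    exists j i a b, U a /\ V b /\ sel j i (a, b).

Lemma rectangle_selection_compact (hR : Rothberger opX) (hW : weakly_Rothberger opY)
  (Hc : compact_subset opX (fun _ => True)) (Ws : nat -> (X * Y -> Prop) -> Prop)
  (hWs : forall n, open_cover open_XY (Ws n)) :
  exists sel, (forall j i, Ws (to_nat (j, i)) (sel j i)) /\ meets_rectangles sel.
Proof.
  destruct (dense_selector_around_compact hR hW (fun j i => Ws (to_nat (j, i)))
              (fun j i => hWs _) _ Hc) as [O [sel [_ [HOK [Hsel Hdense]]]]].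
  exists sel; split; auto.
  intros U V _ [a Ua] HV Vne.
  destruct (Hdense a (fun j => HOK j a I) V HV Vne) as [j [i [b [Vb Sab]]]].
  exists j, i, a, b; auto.
Qed.

(* Non-compact X: S_1(G_K, G_DGamma) applied to the k-th blocks of covers
   selects sets B_k carrying dense selectors; every nonempty open U meets
   some B_k, and the selectors for all k are merged by Cantor pairing. *)
Lemma rectangle_selection_noncompact (hR : Rothberger opX) (hW : weakly_Rothberger opY)
  (hT1 : T1 opX) (hS : S1 (G_K opX) (G_DGamma opX))
  (Hnc : ~ compact_subset opX (fun _ => True)) (Ws : nat -> (X * Y -> Prop) -> Prop)
  (hWs : forall n, open_cover open_XY (Ws n)) :
  exists sel, (forall k m, Ws (to_nat (k, m)) (sel k m)) /\ meets_rectangles sel.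
Proof.
  set (Gs := fun k j i => Ws (to_nat (k, to_nat (j, i)))).
  destruct (hS _ (fun k => dense_selector_sets_G_K hR hW hT1 Hnc (Gs k) (fun j i => hWs _)))
    as [B [HB HDG]].
  destruct (functional_choice (fun k sel => dense_selector (Gs k) (B k) sel)) as [sel Hsel].
  { intro k. apply (HB k). }
  assert (Hblock : forall k, exists T, (forall m, Ws (to_nat (k, m)) (T m)) /\
            (forall j i, T (to_nat (j, i)) = sel k j i)).
  { intro k. apply (flatten_selection (fun m => Ws (to_nat (k, m))) (sel k)).
    apply (Hsel k). }
  destruct (functional_choice _ Hblock) as [T HT].
  exists T; split; [intros k m; apply (HT k)|].
  intros U V HU Une HV Vne.
  destruct (G_DGamma_meets_open opX B HDG U HU Une) as [k [a [Ua Ba]]].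
  destruct (proj2 (Hsel k) a Ba V HV Vne) as [j [i [b [Vb Sab]]]].
  exists k, (to_nat (j, i)), a, b. rewrite (proj2 (HT k)). auto.
Qed.

Lemma weakly_Rothberger_of_rectangle_selection (Ws : nat -> (X * Y -> Prop) -> Prop)
  (sel : nat -> nat -> X * Y -> Prop) :
  (forall j i, Ws (to_nat (j, i)) (sel j i)) -> meets_rectangles sel ->
  exists S : nat -> X * Y -> Prop, (forall n, Ws n (S n)) /\
    (forall W, open_XY W -> (exists p, W p) -> exists n p, W p /\ S n p).
Proof.
  intros Hsel Hmeet.
  destruct (flatten_selection Ws sel Hsel) as [S [HS ES]].
  exists S; split; auto.
  intros W HW [p Wp].
  destruct (HW p Wp) as [U [V [HU [HV [Up [Vp Hs]]]]]].
  destruct (Hmeet U V HU (ex_intro _ _ Up) HV (ex_intro _ _ Vp))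
    as [j [i [a [b [Ua [Vb Sab]]]]]].
  exists (to_nat (j, i)), (a, b). rewrite ES. auto.
Qed.

End Product.

Theorem theorem5p16 (X : Type) (opX : (X -> Prop) -> Prop)
  (hX : is_topology opX) (hT1 : T1 opX) (hinf : infinite_type X)
  (hR : Rothberger opX) (hS : S1 (G_K opX) (G_DGamma opX)) :
  forall (Y : Type) (opY : (Y -> Prop) -> Prop),
    is_topology opY -> T1 opY -> infinite_type Y ->
    weakly_Rothberger opY -> weakly_Rothberger (prod_open opX opY).
Proof.
  intros Y opY hY _ _ hW Ws hWs.
  assert (Hsel : exists sel, (forall j i, Ws (to_nat (j, i)) (sel j i)) /\
                             meets_rectangles X Y opX opY sel).
  { destruct (classic (compact_subset opX (fun _ => True))) as [Hc|Hnc].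
    - exact (rectangle_selection_compact X Y opX opY hX hY hR hW Hc Ws hWs).
    - exact (rectangle_selection_noncompact X Y opX opY hX hY hR hW hT1 hS Hnc Ws hWs). }
  destruct Hsel as [sel [Hsel Hmeet]].
  exact (weakly_Rothberger_of_rectangle_selection X Y opX opY Ws sel Hsel Hmeet).
Qed.
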